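(* Let $\Omega\subset\mathbb R^2$ be a bounded domain and let $u\in C^{2,1}(\bar\Omega\times[0,\infty))$ satisfy $E_2[u]:=-u_t\,\Delta u+\det u_{xx}>0$ on $\bar\Omega\times[0,\infty)$. Let $\mathbf u\in C^2(\bar\Omega)$ be strictly convex on $\bar\Omega$ (i.e. $\mathbf u_{xx}(x)$ is positive definite for every $x\in\bar\Omega$). Assume that there is a point $x_0\in\Omega$ with $\Delta u(x_0,0)>0$, that $\sup_{x\in\partial\Omega}|u(x,t)-\mathbf u(x)|\to0$ as $t\to\infty$, and that $\sup_{x\in\bar\Omega}|E_2[u](x,t)-\det\mathbf u_{xx}(x)|\to0$ as $t\to\infty$. Then $\sup_{x\in\bar\Omega}|u(x,t)-\mathbf u(x)|\to0$ as $t\to\infty$.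
   Context: $u_{xx}$ denotes the Hessian matrix of $u$ in the space variables $x=(x_1,x_2)$, and $u_t$ the time derivative. $C^{2,1}$ means twice continuously differentiable in $x$ and once continuously differentiable in $t$. The limits in the hypotheses and conclusion are understood uniformly in $x$. *)

From Stdlib Require Import Reals.
Open Scope R_scope.

Definition pt : Type := (R * R)%type.

Definition ball_sq (x y : pt) (e : R) : Prop :=
  Rabs (fst y - fst x) < e /\ Rabs (snd y - snd x) < e.

Definition open2 (S : pt -> Prop) : Prop :=
  forall x, S x -> exists e, 0 < e /\ forall y, ball_sq x y e -> S y.

Definition connected2 (S : pt -> Prop) : Prop :=
  ~ exists A B : pt -> Prop,
      open2 A /\ open2 B /\
      (forall x, S x -> A x \/ B x) /\
      (exists x, S x /\ A x) /\ (exists x, S x /\ B x) /\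
      (forall x, S x -> A x -> B x -> False).

Definition bounded2 (S : pt -> Prop) : Prop :=
  exists M, forall x, S x -> Rabs (fst x) <= M /\ Rabs (snd x) <= M.

Definition bounded_domain (S : pt -> Prop) : Prop :=
  (exists x, S x) /\ open2 S /\ connected2 S /\ bounded2 S.

Definition closure2 (S : pt -> Prop) (x : pt) : Prop :=
  forall e, 0 < e -> exists y, S y /\ ball_sq x y e.

Definition boundary2 (S : pt -> Prop) (x : pt) : Prop :=
  closure2 S x /\ ~ S x.

Definition cont_on2 (S : pt -> Prop) (f : pt -> R) : Prop :=
  forall x, S x -> forall e, 0 < e -> exists d, 0 < d /\
    forall y, S y -> ball_sq x y d -> Rabs (f y - f x) < e.

Definition cont_on3 (S : pt -> R -> Prop) (f : pt -> R -> R) : Prop :=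
  forall x t, S x t -> forall e, 0 < e -> exists d, 0 < d /\
    forall y s, S y s -> ball_sq x y d -> Rabs (s - t) < d ->
      Rabs (f y s - f x t) < e.

Definition d1_is (g : pt -> R) (x : pt) (l : R) : Prop :=
  derivable_pt_lim (fun s => g (s, snd x)) (fst x) l.
Definition d2_is (g : pt -> R) (x : pt) (l : R) : Prop :=
  derivable_pt_lim (fun s => g (fst x, s)) (snd x) l.

(* u in C^2(closure S): derivatives in S extend continuously to closure S.
   Given u and candidate derivatives u1 u2 u11 u12 u22. *)
Definition C2_closure (S : pt -> Prop)
    (u u1 u2 u11 u12 u22 : pt -> R) : Prop :=
  (forall x, S x ->
     d1_is u x (u1 x) /\ d2_is u x (u2 x) /\
     d1_is u1 x (u11 x) /\ d2_is u1 x (u12 x) /\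
     d1_is u2 x (u12 x) /\ d2_is u2 x (u22 x)) /\
  cont_on2 (closure2 S) u /\ cont_on2 (closure2 S) u1 /\
  cont_on2 (closure2 S) u2 /\ cont_on2 (closure2 S) u11 /\
  cont_on2 (closure2 S) u12 /\ cont_on2 (closure2 S) u22.

(* u in C^{2,1}(closure S x [0,oo)): derivatives (twice in x, once in t)
   exist in S x (0,oo) and extend continuously to closure S x [0,oo). *)
Definition C21_closure (S : pt -> Prop)
    (u ut u1 u2 u11 u12 u22 : pt -> R -> R) : Prop :=
  (forall x t, S x -> 0 < t ->
     derivable_pt_lim (fun s => u x s) t (ut x t) /\
     d1_is (fun y => u y t) x (u1 x t) /\ d2_is (fun y => u y t) x (u2 x t) /\
     d1_is (fun y => u1 y t) x (u11 x t) /\ d2_is (fun y => u1 y t) x (u12 x t) /\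
     d1_is (fun y => u2 y t) x (u12 x t) /\ d2_is (fun y => u2 y t) x (u22 x t)) /\
  (let D := fun x t => closure2 S x /\ 0 <= t in
   cont_on3 D u /\ cont_on3 D ut /\ cont_on3 D u1 /\ cont_on3 D u2 /\
   cont_on3 D u11 /\ cont_on3 D u12 /\ cont_on3 D u22).

(* symmetric 2x2 matrix [[a, b], [b, c]] is positive definite *)
Definition pos_def2 (a b c : R) : Prop :=
  forall v1 v2, (v1 <> 0 \/ v2 <> 0) ->
    0 < a * v1 * v1 + 2 * b * v1 * v2 + c * v2 * v2.

(* Since [E2[u] > 0] while [E2[u] = det u_xx <= 0] wherever [Delta u = 0], the Laplacian of
   [u] never vanishes on [closure Omega x [0, oo)]; by continuity in [t] at [x0] and
   connectedness of [Omega] it is positive, so the equation is elliptic for every [u(., t)].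
   Each one-sided bound then comes from the maximum principle applied, with [alpha = +-1], to
     [alpha (u - U) + eta |x|^2 - A exp (-k (t - T)) - e / 2]
   on [closure Omega x [T, t]].  It is nonpositive on the boundary and at [t = T]; at an
   interior maximum [alpha u_t >= -k A] and [alpha D^2 (u - U) <= -2 eta I], and monotonicity
   of [det] on positive definite matrices then keeps [E2[u]] a fixed distance away from
   [det U_xx], contradicting [E2[u] -> det U_xx]. *)

From Stdlib Require Import Reals Lra Lia Psatz Classical ClassicalEpsilon.
Open Scope R_scope.

(** * Functions of one real variable *)

Lemma Rabs_le_bounds z M : Rabs z <= M -> - M <= z <= M.
Proof.
  intros H. pose proof (Rle_abs z). pose proof (Rle_abs (- z)). rewrite Rabs_Ropp in *. lra.
Qed.

Lemma sign_mul_le_abs alpha z : alpha = 1 \/ alpha = -1 -> alpha * z <= Rabs z.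
Proof.
  intros [-> | ->]; [rewrite Rmult_1_l; apply Rle_abs|].
  rewrite <- Rabs_Ropp. replace (-1 * z) with (- z) by ring. apply Rle_abs.
Qed.

Lemma div_succ_mul_le c A : 0 <= c -> 0 <= A -> c / (A + 1) * A <= c.
Proof.
  intros Hc HA. replace (c / (A + 1) * A) with (c - c / (A + 1)) by (field; lra).
  assert (0 <= c / (A + 1)) by (apply Rmult_le_pos; [|apply Rlt_le, Rinv_0_lt_compat]; lra).
  lra.
Qed.

Lemma Rmax0_lipschitz s s' : Rabs (Rmax 0 s' - Rmax 0 s) <= Rabs (s' - s).
Proof.
  unfold Rmax. destruct (Rle_dec 0 s'), (Rle_dec 0 s);
    apply Rabs_le; pose proof (Rabs_le_bounds (s' - s) _ (Rle_refl _));
    pose proof (Rle_abs (s' - s)); lra.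
Qed.

Lemma derivable_pt_lim_lincomb f g x a b l m :
  derivable_pt_lim f x l -> derivable_pt_lim g x m ->
  derivable_pt_lim (fun s => a * f s + b * g s) x (a * l + b * m).
Proof.
  intros Df Dg.
  exact (derivable_pt_lim_plus _ _ _ _ _ (derivable_pt_lim_scal _ a _ _ Df)
           (derivable_pt_lim_scal _ b _ _ Dg)).
Qed.

Lemma derivable_pt_lim_shift f s l :
  derivable_pt_lim (fun h => f (s + h)) 0 l -> derivable_pt_lim f s l.
Proof.
  intros D eps Heps. destruct (D eps Heps) as [d Hd]. exists d. intros h Hh0 Hhd.
  specialize (Hd h Hh0 Hhd). rewrite Rplus_0_l, Rplus_0_r in Hd. exact Hd.
Qed.

Lemma derivable_pt_lim_quadratic a b c x l : l = 2 * a * x + b ->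
  derivable_pt_lim (fun s => a * s * s + b * s + c) x l.
Proof.
  intros ->.
  apply (derivable_pt_lim_ext (fun s => a * (id s * id s) + 1 * (b * id s + c * fct_cte 1 s))).
  { intros s. unfold id, fct_cte. ring. }
  replace (2 * a * x + b) with (a * (1 * id x + id x * 1) + 1 * (b * 1 + c * 0))
    by (unfold id; ring).
  apply derivable_pt_lim_lincomb.
  - apply (derivable_pt_lim_mult id id); apply derivable_pt_lim_id.
  - apply derivable_pt_lim_lincomb; [apply derivable_pt_lim_id | apply derivable_pt_lim_const].
Qed.

Lemma deriv_nonneg_at_left_max f t l d : derivable_pt_lim f t l -> 0 < d ->
  (forall s, t - d < s <= t -> f s <= f t) -> 0 <= l.
Proof.
  intros D Hd Hmax. destruct (Rle_lt_dec 0 l) as [|Hl]; [assumption|exfalso].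
  destruct (D (- l / 2)) as [[dl Hdl] HD]; [lra|]. simpl in HD.
  set (h := - Rmin dl d / 2).
  assert (Hmin : 0 < Rmin dl d) by (apply Rmin_pos; assumption).
  pose proof (Rmin_l dl d). pose proof (Rmin_r dl d).
  assert (Hh : h < 0) by (unfold h; lra).
  specialize (HD h ltac:(lra) ltac:(rewrite Rabs_left by lra; unfold h; lra)).
  assert (f (t + h) <= f t) by (apply Hmax; unfold h; lra).
  assert (0 <= (f (t + h) - f t) / h).
  { unfold Rdiv. pose proof (Rinv_lt_0_compat h Hh). nra. }
  apply Rabs_def2 in HD. lra.
Qed.

Lemma deriv_nonpos_at_right_max f t l d : derivable_pt_lim f t l -> 0 < d ->
  (forall s, t <= s < t + d -> f s <= f t) -> l <= 0.
Proof.
  intros D Hd Hmax. destruct (Rle_lt_dec l 0) as [|Hl]; [assumption|exfalso].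
  destruct (D (l / 2)) as [[dl Hdl] HD]; [lra|]. simpl in HD.
  set (h := Rmin dl d / 2).
  assert (Hmin : 0 < Rmin dl d) by (apply Rmin_pos; assumption).
  pose proof (Rmin_l dl d). pose proof (Rmin_r dl d).
  assert (Hh : 0 < h) by (unfold h; lra).
  specialize (HD h ltac:(lra) ltac:(rewrite Rabs_right by lra; unfold h; lra)).
  assert (f (t + h) <= f t) by (apply Hmax; unfold h; lra).
  assert ((f (t + h) - f t) / h <= 0).
  { unfold Rdiv. pose proof (Rinv_0_lt_compat h Hh). nra. }
  apply Rabs_def2 in HD. lra.
Qed.

Lemma MVT_between f f' a b :
  (forall c, Rabs (c - a) <= Rabs (b - a) -> derivable_pt_lim f c (f' c)) ->
  exists c, Rabs (c - a) <= Rabs (b - a) /\ f b - f a = f' c * (b - a).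
Proof.
  intros D. destruct (Rtotal_order a b) as [Hab|[<-|Hab]].
  - destruct (MVT_cor2 f f' a b Hab) as [c [Hc Hcab]].
    { intros c Hc. apply D. rewrite !Rabs_right; lra. }
    exists c. split; [rewrite !Rabs_right; lra | assumption].
  - exists a. split; [lra | ring].
  - destruct (MVT_cor2 f f' b a Hab) as [c [Hc Hcab]].
    { intros c Hc. apply D. rewrite (Rabs_left (b - a)) by lra. apply Rabs_le. lra. }
    exists c. split; [rewrite (Rabs_left (b - a)) by lra; apply Rabs_le; lra | lra].
Qed.

(* At an interior maximum the first derivative vanishes, so a positive second derivative
   would make [g'] positive just to the right, and [g] would increase there. *)
Lemma second_deriv_nonpos_at_max g g' c d : 0 < d ->
  (forall s, Rabs s < d -> derivable_pt_lim g s (g' s)) ->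
  derivable_pt_lim g' 0 c ->
  (forall s, Rabs s < d -> g s <= g 0) -> c <= 0.
Proof.
  intros Hd Dg Dg' Hmax.
  assert (D0 : derivable_pt_lim g 0 (g' 0)) by (apply Dg; rewrite Rabs_R0; exact Hd).
  assert (Hg'0 : g' 0 = 0).
  { apply Rle_antisym.
    - apply (deriv_nonpos_at_right_max g 0 _ d D0 Hd).
      intros s Hs. apply Hmax. rewrite Rabs_right; lra.
    - apply (deriv_nonneg_at_left_max g 0 _ d D0 Hd).
      intros s Hs. apply Hmax. apply Rabs_def1; lra. }
  destruct (Rle_lt_dec c 0) as [|Hc]; [assumption|exfalso].
  destruct (Dg' (c / 2)) as [[dl Hdl] HD]; [lra|]. simpl in HD.
  assert (Hg'pos : forall h, 0 < h < dl -> 0 < g' h).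
  { intros h Hh. specialize (HD h ltac:(lra) ltac:(rewrite Rabs_right; lra)).
    rewrite Rplus_0_l, Hg'0, Rminus_0_r in HD. apply Rabs_def2 in HD.
    destruct (Rle_lt_dec (g' h) 0) as [Hn|]; [|assumption].
    assert (g' h / h <= 0) by (unfold Rdiv; pose proof (Rinv_0_lt_compat h ltac:(lra)); nra).
    lra. }
  set (h := Rmin dl d / 2).
  assert (Hmin : 0 < Rmin dl d) by (apply Rmin_pos; assumption).
  pose proof (Rmin_l dl d). pose proof (Rmin_r dl d).
  destruct (MVT_cor2 g g' 0 h) as [xi [Hinc Hxi]]; [unfold h; lra| |].
  { intros s Hs. apply Dg. rewrite Rabs_right by lra. unfold h in Hs. lra. }
  assert (g h <= g 0) by (apply Hmax; rewrite Rabs_right; unfold h; lra).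
  assert (0 < g' xi) by (apply Hg'pos; unfold h in Hxi; lra).
  assert (0 < g' xi * (h - 0)) by (apply Rmult_lt_0_compat; unfold h; lra).
  lra.
Qed.

Lemma exp_decay_le A e y : 0 <= A -> 0 < e -> 2 * A / e <= y -> A * exp (- y) <= e / 2.
Proof.
  intros HA He Hy.
  assert (HAy : 2 * A <= e * y).
  { apply (Rmult_le_compat_l e) in Hy; [|lra].
    replace (e * (2 * A / e)) with (2 * A) in Hy by (field; lra). exact Hy. }
  assert (Hy0 : 0 <= y) by nra.
  assert (Hinv : exp (- y) * exp y = 1) by (rewrite <- exp_plus, Rplus_opp_l; apply exp_0).
  pose proof (exp_ineq1_le y). pose proof (exp_pos (- y)).
  assert (Hdecay : exp (- y) * (1 + y) <= 1) by nra.
  apply (Rmult_le_reg_r (1 + y)); [lra|]. nra.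
Qed.

Lemma exp_decay_bounds A k T s : 0 <= A -> 0 < k -> T <= s ->
  0 <= A * exp (- k * (s - T)) <= A.
Proof.
  intros HA Hk Hs. pose proof (exp_pos (- k * (s - T))).
  assert (exp (- k * (s - T)) <= 1).
  { destruct (Rle_lt_or_eq_dec _ _ Hs) as [Hlt | <-].
    - left. rewrite <- exp_0. apply exp_increasing. nra.
    - rewrite Rminus_diag, Rmult_0_r, exp_0. lra. }
  split; nra.
Qed.

Lemma derivable_pt_lim_exp_barrier A k T c s :
  derivable_pt_lim (fun s => - (A * exp (- k * (s - T))) - c) s (k * (A * exp (- k * (s - T)))).
Proof.
  apply (derivable_pt_lim_ext (fun s => - A * comp exp (fun s => 0 * s * s + - k * s + k * T) s
                                        + 1 * (- c))).
  { intros z. unfold comp. replace (0 * z * z + - k * z + k * T) with (- k * (z - T)) by ring.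
    ring. }
  replace (k * (A * exp (- k * (s - T))))
    with (- A * (exp (0 * s * s + - k * s + k * T) * - k) + 1 * 0)
    by (replace (0 * s * s + - k * s + k * T) with (- k * (s - T)) by ring; ring).
  apply derivable_pt_lim_lincomb; [|apply derivable_pt_lim_const].
  apply derivable_pt_lim_comp;
    [apply derivable_pt_lim_quadratic; ring | apply derivable_pt_lim_exp].
Qed.

(** * Functions on the plane *)

Definition continuous_at2 (F : pt -> R) (y : pt) : Prop :=
  forall e, 0 < e -> exists d, 0 < d /\ forall z, ball_sq y z d -> Rabs (F z - F y) < e.

Lemma ball_sq_refl x d : 0 < d -> ball_sq x x d.
Proof. intros Hd. unfold ball_sq. rewrite !Rminus_diag, Rabs_R0. lra. Qed.

Lemma ball_sq_pos x y d : ball_sq x y d -> 0 < d.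
Proof. intros [H _]. pose proof (Rabs_pos (fst y - fst x)). lra. Qed.

Lemma ball_sq_le x y d d' : d <= d' -> ball_sq x y d -> ball_sq x y d'.
Proof. intros Hd [H1 H2]. split; lra. Qed.

Lemma ball_sq_trans x y z d d' : ball_sq x y d -> ball_sq y z d' -> ball_sq x z (d + d').
Proof.
  intros [H1 H2] [H3 H4]. split.
  - replace (fst z - fst x) with ((fst z - fst y) + (fst y - fst x)) by ring.
    eapply Rle_lt_trans; [apply Rabs_triang | lra].
  - replace (snd z - snd x) with ((snd z - snd y) + (snd y - snd x)) by ring.
    eapply Rle_lt_trans; [apply Rabs_triang | lra].
Qed.

Lemma line_in_ball x w1 w2 d s : 0 < d -> Rabs s < d / (Rabs w1 + Rabs w2 + 1) ->
  ball_sq x (fst x + s * w1, snd x + s * w2) d.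
Proof.
  intros Hd Hs. set (W := Rabs w1 + Rabs w2 + 1) in Hs.
  pose proof (Rabs_pos w1). pose proof (Rabs_pos w2). pose proof (Rabs_pos s).
  assert (HsW : Rabs s * W < d).
  { apply (Rmult_lt_compat_r W) in Hs; [|unfold W; lra].
    unfold Rdiv in Hs. rewrite Rmult_assoc, Rinv_l, Rmult_1_r in Hs by (unfold W; lra).
    exact Hs. }
  unfold ball_sq; simpl.
  replace (fst x + s * w1 - fst x) with (s * w1) by ring.
  replace (snd x + s * w2 - snd x) with (s * w2) by ring.
  rewrite !Rabs_mult. unfold W in HsW. split; nra.
Qed.

Lemma continuous_at2_lincomb a b F G y :
  continuous_at2 F y -> continuous_at2 G y -> continuous_at2 (fun z => a * F z + b * G z) y.
Proof.
  intros CF CG e He. set (Ka := Rabs a + 1). set (Kb := Rabs b + 1).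
  pose proof (Rabs_pos a). pose proof (Rabs_pos b).
  destruct (CF (e / 2 / Ka)) as [d1 [Hd1 H1]]; [apply Rdiv_lt_0_compat; unfold Ka; lra|].
  destruct (CG (e / 2 / Kb)) as [d2 [Hd2 H2]]; [apply Rdiv_lt_0_compat; unfold Kb; lra|].
  exists (Rmin d1 d2). split; [apply Rmin_pos; assumption|].
  intros z Hz.
  specialize (H1 z (ball_sq_le _ _ _ _ (Rmin_l d1 d2) Hz)).
  specialize (H2 z (ball_sq_le _ _ _ _ (Rmin_r d1 d2) Hz)).
  replace (a * F z + b * G z - (a * F y + b * G y))
    with (a * (F z - F y) + b * (G z - G y)) by ring.
  eapply Rle_lt_trans; [apply Rabs_triang|]. rewrite !Rabs_mult.
  assert (e / 2 / Ka * Ka = e / 2) by (field; unfold Ka; lra).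
  assert (e / 2 / Kb * Kb = e / 2) by (field; unfold Kb; lra).
  pose proof (Rabs_pos (F z - F y)). pose proof (Rabs_pos (G z - G y)).
  assert (Rabs a * Rabs (F z - F y) < Ka * (e / 2 / Ka)) by (unfold Ka in *; nra).
  assert (Rabs b * Rabs (G z - G y) < Kb * (e / 2 / Kb)) by (unfold Kb in *; nra).
  lra.
Qed.

Lemma increment_by_partials F F1 F2 y p d :
  (forall z, ball_sq y z d -> d1_is F z (F1 z) /\ d2_is F z (F2 z)) -> ball_sq y p d ->
  exists z1 z2, ball_sq y z1 d /\ ball_sq y z2 d /\
    F p - F y = (fst p - fst y) * F1 z1 + (snd p - snd y) * F2 z2.
Proof.
  intros HD Hp. pose proof (ball_sq_pos _ _ _ Hp) as Hd.
  destruct y as [a1 a2], p as [b1 b2]. destruct Hp as [Hp1 Hp2]; simpl in *.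
  destruct (MVT_between (fun s => F (s, b2)) (fun s => F1 (s, b2)) a1 b1) as [c1 [Hc1 E1]].
  { intros c Hc. apply (HD (c, b2)). split; simpl; lra. }
  destruct (MVT_between (fun s => F (a1, s)) (fun s => F2 (a1, s)) a2 b2) as [c2 [Hc2 E2]].
  { intros c Hc. apply (HD (a1, c)). split; simpl; [rewrite Rminus_diag, Rabs_R0|]; lra. }
  exists (c1, b2), (a1, c2). split; [|split].
  - split; simpl; lra.
  - split; simpl; [rewrite Rminus_diag, Rabs_R0|]; lra.
  - simpl in *. lra.
Qed.

Lemma derivable_pt_lim_along_line F F1 F2 y w1 w2 r : 0 < r ->
  (forall z, ball_sq y z r -> d1_is F z (F1 z) /\ d2_is F z (F2 z)) ->
  continuous_at2 F1 y -> continuous_at2 F2 y ->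
  derivable_pt_lim (fun s => F (fst y + s * w1, snd y + s * w2)) 0 (w1 * F1 y + w2 * F2 y).
Proof.
  intros Hr HD C1 C2 eps Heps.
  set (W := Rabs w1 + Rabs w2 + 1).
  pose proof (Rabs_pos w1). pose proof (Rabs_pos w2).
  assert (HW : 0 < W) by (unfold W; lra).
  destruct (C1 (eps / W)) as [d1 [Hd1 H1]]; [apply Rdiv_lt_0_compat; assumption|].
  destruct (C2 (eps / W)) as [d2 [Hd2 H2]]; [apply Rdiv_lt_0_compat; assumption|].
  set (d := Rmin r (Rmin d1 d2)).
  assert (Hd : 0 < d) by (unfold d; repeat apply Rmin_pos; assumption).
  assert (Hdr : d <= r) by apply Rmin_l.
  assert (Hd12 : d <= d1 /\ d <= d2).
  { unfold d. pose proof (Rmin_r r (Rmin d1 d2)).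
    pose proof (Rmin_l d1 d2). pose proof (Rmin_r d1 d2). lra. }
  assert (HdW : 0 < d / W) by (apply Rdiv_lt_0_compat; assumption).
  exists (mkposreal _ HdW). simpl. intros h Hh0 Hh.
  rewrite Rplus_0_l.
  destruct (increment_by_partials F F1 F2 y (fst y + h * w1, snd y + h * w2) d)
    as (z1 & z2 & Hz1 & Hz2 & Hinc).
  { intros z Hz. apply HD, (ball_sq_le _ _ _ _ Hdr Hz). }
  { apply line_in_ball; assumption. }
  replace (fst y + 0 * w1, snd y + 0 * w2) with y by (destruct y; simpl; f_equal; ring).
  rewrite Hinc. simpl.
  replace (((fst y + h * w1 - fst y) * F1 z1 + (snd y + h * w2 - snd y) * F2 z2) / h
           - (w1 * F1 y + w2 * F2 y))
    with (w1 * (F1 z1 - F1 y) + w2 * (F2 z2 - F2 y)) by (field; assumption).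
  specialize (H1 z1 (ball_sq_le _ _ _ _ (proj1 Hd12) Hz1)).
  specialize (H2 z2 (ball_sq_le _ _ _ _ (proj2 Hd12) Hz2)).
  eapply Rle_lt_trans; [apply Rabs_triang|]. rewrite !Rabs_mult.
  pose proof (Rabs_pos (F1 z1 - F1 y)). pose proof (Rabs_pos (F2 z2 - F2 y)).
  assert (eps / W * W = eps) by (field; lra).
  assert (Rabs w1 * Rabs (F1 z1 - F1 y) <= Rabs w1 * (eps / W)) by nra.
  assert (Rabs w2 * Rabs (F2 z2 - F2 y) <= Rabs w2 * (eps / W)) by nra.
  assert (0 < eps / W) by (apply Rdiv_lt_0_compat; assumption).
  unfold W in *. nra.
Qed.

Definition C2_on_ball (F F1 F2 F11 F12 F22 : pt -> R) (x : pt) (r : R) : Prop :=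
  forall y, ball_sq x y r ->
    d1_is F y (F1 y) /\ d2_is F y (F2 y) /\ d1_is F1 y (F11 y) /\ d2_is F1 y (F12 y) /\
    d1_is F2 y (F12 y) /\ d2_is F2 y (F22 y) /\
    continuous_at2 F1 y /\ continuous_at2 F2 y /\
    continuous_at2 F11 y /\ continuous_at2 F12 y /\ continuous_at2 F22 y.

Lemma C2_on_ball_lincomb a b F F1 F2 F11 F12 F22 G G1 G2 G11 G12 G22 x r :
  C2_on_ball F F1 F2 F11 F12 F22 x r -> C2_on_ball G G1 G2 G11 G12 G22 x r ->
  C2_on_ball (fun y => a * F y + b * G y)
    (fun y => a * F1 y + b * G1 y) (fun y => a * F2 y + b * G2 y)
    (fun y => a * F11 y + b * G11 y) (fun y => a * F12 y + b * G12 y)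
    (fun y => a * F22 y + b * G22 y) x r.
Proof.
  intros HF HG y Hy.
  destruct (HF y Hy) as (F1y & F2y & F11y & F12y & F21y & F22y & CF1 & CF2 & CF11 & CF12 & CF22).
  destruct (HG y Hy) as (G1y & G2y & G11y & G12y & G21y & G22y & CG1 & CG2 & CG11 & CG12 & CG22).
  unfold d1_is, d2_is in *.
  repeat split; apply derivable_pt_lim_lincomb || apply continuous_at2_lincomb; assumption.
Qed.

Definition sqnorm (y : pt) : R := fst y * fst y + snd y * snd y.

Lemma C2_on_ball_sqnorm x r :
  C2_on_ball sqnorm (fun y => 2 * fst y) (fun y => 2 * snd y)
    (fun _ => 2) (fun _ => 0) (fun _ => 2) x r.
Proof.
  intros y _. unfold d1_is, d2_is, sqnorm; simpl.
  assert (Hconst : forall c, continuous_at2 (fun _ => c) y).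
  { intros c e He. exists 1. split; [lra|]. intros. rewrite Rminus_diag, Rabs_R0. exact He. }
  assert (Hlin : forall i : pt -> R, (forall z, Rabs (i z - i y) <= Rabs (fst z - fst y))
                   \/ (forall z, Rabs (i z - i y) <= Rabs (snd z - snd y)) ->
                 continuous_at2 (fun z => 2 * i z) y).
  { intros i Hi e He. exists (e / 2). split; [lra|]. intros z [B1 B2].
    replace (2 * i z - 2 * i y) with (2 * (i z - i y)) by ring.
    rewrite Rabs_mult, Rabs_right by lra.
    destruct Hi as [Hi|Hi]; specialize (Hi z); lra. }
  repeat split; try apply Hconst.
  - apply (derivable_pt_lim_ext (fun s => 1 * s * s + 0 * s + snd y * snd y)); [intros; ring|].
    apply derivable_pt_lim_quadratic; ring.
  - apply (derivable_pt_lim_ext (fun s => 1 * s * s + 0 * s + fst y * fst y)); [intros; ring|].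
    apply derivable_pt_lim_quadratic; ring.
  - apply (derivable_pt_lim_ext (fun s => 0 * s * s + 2 * s + 0)); [intros; ring|].
    apply derivable_pt_lim_quadratic; ring.
  - apply (derivable_pt_lim_ext (fun s => 0 * s * s + 0 * s + 2 * fst y)); [intros; ring|].
    apply derivable_pt_lim_quadratic; ring.
  - apply (derivable_pt_lim_ext (fun s => 0 * s * s + 0 * s + 2 * snd y)); [intros; ring|].
    apply derivable_pt_lim_quadratic; ring.
  - apply (derivable_pt_lim_ext (fun s => 0 * s * s + 2 * s + 0)); [intros; ring|].
    apply derivable_pt_lim_quadratic; ring.
  - apply (Hlin fst). left. intros z. apply Rle_refl.
  - apply (Hlin snd). right. intros z. apply Rle_refl.
Qed.

Definition psd2 (a b c : R) : Prop :=
  forall v1 v2, 0 <= a * v1 * v1 + 2 * b * v1 * v2 + c * v2 * v2.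

Lemma psd2_ext a b c a' b' c' : psd2 a b c -> a = a' -> b = b' -> c = c' -> psd2 a' b' c'.
Proof. intros H -> -> ->. exact H. Qed.

(* Restrict [F] to the line [s |-> x + s v] and apply the one-variable second derivative test. *)
Lemma hessian_nonpos_at_local_max F F1 F2 F11 F12 F22 x r : 0 < r ->
  C2_on_ball F F1 F2 F11 F12 F22 x r -> (forall y, ball_sq x y r -> F y <= F x) ->
  psd2 (- F11 x) (- F12 x) (- F22 x).
Proof.
  intros Hr HC Hmax v1 v2.
  set (P := fun s => (fst x + s * v1, snd x + s * v2)).
  set (d := r / 2 / (Rabs v1 + Rabs v2 + 1)).
  pose proof (Rabs_pos v1). pose proof (Rabs_pos v2).
  assert (Hd : 0 < d) by (unfold d; repeat apply Rdiv_lt_0_compat; lra).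
  assert (HP : forall s, Rabs s < d -> ball_sq x (P s) (r / 2))
    by (intros s Hs; apply line_in_ball; [lra | exact Hs]).
  assert (Hx : ball_sq x x r) by (apply ball_sq_refl; assumption).
  destruct (HC x Hx) as (_ & _ & F11x & F12x & F21x & F22x & _ & _ & C11 & C12 & C22).
  assert (Hsec : v1 * (v1 * F11 x + v2 * F12 x) + v2 * (v1 * F12 x + v2 * F22 x) <= 0).
  { apply (second_deriv_nonpos_at_max (fun s => F (P s))
             (fun s => v1 * F1 (P s) + v2 * F2 (P s)) _ d Hd).
    - intros s Hs. apply derivable_pt_lim_shift.
      assert (Hin : forall z, ball_sq (P s) z (r / 2) -> ball_sq x z r).
      { intros z Hz. replace r with (r / 2 + r / 2) by field.
        exact (ball_sq_trans _ _ _ _ _ (HP s Hs) Hz). }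
      destruct (HC (P s) (Hin _ (ball_sq_refl (P s) (r / 2) ltac:(lra))))
        as (_ & _ & _ & _ & _ & _ & C1 & C2 & _).
      apply (derivable_pt_lim_ext (fun h => F (fst (P s) + h * v1, snd (P s) + h * v2))).
      { intros h. unfold P; simpl. f_equal. f_equal; ring. }
      apply (derivable_pt_lim_along_line F F1 F2 (P s) v1 v2 (r / 2)); [lra| |assumption..].
      intros z Hz. destruct (HC z (Hin z Hz)) as (? & ? & _). split; assumption.
    - apply (derivable_pt_lim_lincomb (fun s => F1 (P s)) (fun s => F2 (P s)));
        apply (derivable_pt_lim_along_line _ _ _ x v1 v2 r Hr); try assumption;
        intros z Hz; destruct (HC z Hz) as (_ & _ & ? & ? & ? & ? & _); split; assumption.
    - intros s Hs.
      replace (P 0) with x by (unfold P; destruct x; simpl; f_equal; ring).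
      apply Hmax, (ball_sq_le _ _ (r / 2)); [lra | apply HP, Hs]. }
  nra.
Qed.

(** * Extreme values on compact cylinders *)

Definition increasing_nat (phi : nat -> nat) : Prop := forall n, (phi n < phi (S n))%nat.

Lemma increasing_nat_ge phi : increasing_nat phi -> forall n, (n <= phi n)%nat.
Proof. intros H n. induction n as [|n IH]; [lia|]. specialize (H n). lia. Qed.

Lemma increasing_nat_comp phi psi :
  increasing_nat phi -> increasing_nat psi -> increasing_nat (fun n => phi (psi n)).
Proof.
  intros Hphi Hpsi n.
  assert (Hmono : forall m m', (m <= m')%nat -> (phi m <= phi m')%nat).
  { intros m m' Hm. induction Hm as [|m' _ IH]; [lia|]. specialize (Hphi m'). lia. }
  specialize (Hpsi n). specialize (Hmono (S (psi n)) (psi (S n)) Hpsi).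
  specialize (Hphi (psi n)). lia.
Qed.

Lemma Un_cv_subseq u l phi :
  Un_cv u l -> increasing_nat phi -> Un_cv (fun n => u (phi n)) l.
Proof.
  intros H Hphi eps Heps. destruct (H eps Heps) as [N HN]. exists N. intros n Hn.
  apply HN. pose proof (increasing_nat_ge phi Hphi n). lia.
Qed.

Lemma Un_cv_in_interval u l a b :
  Un_cv u l -> (forall n, a <= u n <= b) -> a <= l <= b.
Proof.
  intros H Hab. split; apply Rnot_lt_le; intros Hl.
  - destruct (H (a - l)) as [N HN]; [lra|].
    specialize (HN N (Nat.le_refl N)). specialize (Hab N).
    unfold R_dist in HN. apply Rabs_def2 in HN. lra.
  - destruct (H (l - b)) as [N HN]; [lra|].
    specialize (HN N (Nat.le_refl N)). specialize (Hab N).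
    unfold R_dist in HN. apply Rabs_def2 in HN. lra.
Qed.

(* A cluster point given by [Bolzano_Weierstrass] is the limit of the subsequence that
   picks, beyond the previous index, a term within [1 / (n + 1)] of it. *)
Lemma bounded_seq_cv_subseq (u : nat -> R) (M : R) : (forall n, Rabs (u n) <= M) ->
  exists phi l, increasing_nat phi /\ Un_cv (fun n => u (phi n)) l.
Proof.
  intros HM.
  destruct (Bolzano_Weierstrass u (fun c => - M <= c <= M) (compact_P3 (- M) M)) as [l Hl].
  { intros n. apply Rabs_le_bounds, HM. }
  assert (Hnear : forall Nn : nat * nat,
             exists p, (fst Nn <= p)%nat /\ Rabs (u p - l) < / INR (S (snd Nn))).
  { intros [N n]; simpl.
    assert (Hpos : 0 < / INR (S n)) by (apply Rinv_0_lt_compat, lt_0_INR; lia).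
    destruct (Hl (disc l (mkposreal _ Hpos)) N) as [p [Hp Hd]].
    - exists (mkposreal _ Hpos). intros y Hy. exact Hy.
    - exists p. split; assumption. }
  destruct (choice _ Hnear) as [pick Hpick].
  set (phi := fix phi (n : nat) : nat :=
         match n with O => pick (O, O) | S m => pick (S (phi m), S m) end).
  exists phi, l. split.
  - intros n. exact (proj1 (Hpick (S (phi n), S n))).
  - intros eps Heps. destruct (archimed_cor1 eps Heps) as [N [HN HN0]].
    exists N. intros n Hn. unfold R_dist.
    assert (Hphi : Rabs (u (phi n) - l) < / INR (S n)) by (destruct n; apply (Hpick (_, _))).
    assert (/ INR (S n) <= / INR N).
    { apply Rinv_le_contravar; [apply lt_0_INR; assumption | apply le_INR; lia]. }
    lra.
Qed.

Lemma bounded_seq3_cv_subseq (p : nat -> pt) (s : nat -> R) (M : R) :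
  (forall n, Rabs (fst (p n)) <= M /\ Rabs (snd (p n)) <= M /\ Rabs (s n) <= M) ->
  exists phi x t, increasing_nat phi /\ Un_cv (fun n => fst (p (phi n))) (fst x) /\
    Un_cv (fun n => snd (p (phi n))) (snd x) /\ Un_cv (fun n => s (phi n)) t.
Proof.
  intros HM.
  destruct (bounded_seq_cv_subseq (fun n => fst (p n)) M) as [phi1 [x1 [Hphi1 C1]]].
  { intros n. apply HM. }
  destruct (bounded_seq_cv_subseq (fun n => snd (p (phi1 n))) M) as [phi2 [x2 [Hphi2 C2]]].
  { intros n. apply HM. }
  destruct (bounded_seq_cv_subseq (fun n => s (phi1 (phi2 n))) M) as [phi3 [t [Hphi3 C3]]].
  { intros n. apply HM. }
  exists (fun n => phi1 (phi2 (phi3 n))), (x1, x2), t. simpl. split; [|split; [|split]].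
  - apply (increasing_nat_comp phi1 (fun n => phi2 (phi3 n))); [|apply increasing_nat_comp];
      assumption.
  - apply (Un_cv_subseq (fun n => fst (p (phi1 n)))); [assumption|].
    apply increasing_nat_comp; assumption.
  - apply (Un_cv_subseq (fun n => snd (p (phi1 (phi2 n))))); assumption.
  - exact C3.
Qed.

Definition seq_closed2 (K : pt -> Prop) : Prop :=
  forall (p : nat -> pt) x, (forall n, K (p n)) ->
    Un_cv (fun n => fst (p n)) (fst x) -> Un_cv (fun n => snd (p n)) (snd x) -> K x.

Lemma closure2_seq_closed S : seq_closed2 (closure2 S).
Proof.
  intros p x Hp H1 H2 e He.
  destruct (H1 (e / 2)) as [N1 HN1]; [lra|]. destruct (H2 (e / 2)) as [N2 HN2]; [lra|].
  set (N := max N1 N2).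
  specialize (HN1 N (Nat.le_max_l _ _)). specialize (HN2 N (Nat.le_max_r _ _)).
  unfold R_dist in HN1, HN2.
  destruct (Hp N (e / 2) ltac:(lra)) as [y [Hy Hball]].
  exists y. split; [assumption|].
  replace e with (e / 2 + e / 2) by field. apply (ball_sq_trans _ (p N)); [|assumption].
  split; assumption.
Qed.

Section ExtremeValue.
Variables (K : pt -> Prop) (M a b : R).
Hypothesis HK_bounded : forall x, K x -> Rabs (fst x) <= M /\ Rabs (snd x) <= M.
Hypothesis HK_closed : seq_closed2 K.
Variable f : pt -> R -> R.
Hypothesis Hf : cont_on3 (fun x t => K x /\ a <= t <= b) f.

Lemma cyl_seq_limsup (p : nat -> pt) (s : nat -> R) :
  (forall n, K (p n) /\ a <= s n <= b) ->
  exists phi x t, increasing_nat phi /\ K x /\ a <= t <= b /\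
    forall eps, 0 < eps -> exists N, forall n, (N <= n)%nat ->
      f (p (phi n)) (s (phi n)) < f x t + eps.
Proof.
  intros Hps.
  destruct (bounded_seq3_cv_subseq p s (M + Rabs a + Rabs b))
    as (phi & x & t & Hphi & C1 & C2 & C3).
  { intros n. destruct (Hps n) as [HKn Hsn]. destruct (HK_bounded _ HKn) as [H1 H2].
    pose proof (Rabs_pos (fst (p n))). pose proof (Rabs_pos a). pose proof (Rabs_pos b).
    pose proof (Rle_abs (- a)). pose proof (Rle_abs b). rewrite Rabs_Ropp in *.
    repeat split; try lra. apply Rabs_le. lra. }
  assert (HKx : K x)
    by (apply (HK_closed (fun n => p (phi n))); [intros n; apply Hps | ..]; assumption).
  assert (Ht : a <= t <= b) by (apply (Un_cv_in_interval _ _ _ _ C3); intros n; apply Hps).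
  exists phi, x, t. split; [|split; [|split]]; try assumption.
  intros eps Heps.
  destruct (Hf x t (conj HKx Ht) eps Heps) as [d [Hd Hfd]].
  destruct (C1 d Hd) as [N1 HN1]. destruct (C2 d Hd) as [N2 HN2]. destruct (C3 d Hd) as [N3 HN3].
  exists (max N1 (max N2 N3)). intros n Hn.
  assert (Hball : ball_sq x (p (phi n)) d) by (split; [apply HN1 | apply HN2]; lia).
  assert (Hn3 : Rabs (s (phi n) - t) < d) by (apply HN3; lia).
  specialize (Hfd _ _ (Hps (phi n)) Hball Hn3). apply Rabs_def2 in Hfd. lra.
Qed.

Lemma cyl_bounded_above : exists B, forall y s, K y -> a <= s <= b -> f y s <= B.
Proof.
  apply NNPP. intros Hunb.
  assert (Hbig : forall n : nat, exists ys : pt * R,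
             K (fst ys) /\ a <= snd ys <= b /\ INR n < f (fst ys) (snd ys)).
  { intros n. apply NNPP. intros Hn. apply Hunb. exists (INR n). intros y s Hy Hs.
    apply Rnot_lt_le. intros Hlt. apply Hn. exists (y, s). auto. }
  destruct (choice _ Hbig) as [ps Hps].
  destruct (cyl_seq_limsup (fun n => fst (ps n)) (fun n => snd (ps n)))
    as [phi [x [t [Hphi [_ [_ Hlim]]]]]].
  { intros n. split; apply Hps. }
  destruct (Hlim 1 Rlt_0_1) as [N HN].
  destruct (INR_unbounded (f x t + 1)) as [m Hm].
  set (n := max N m).
  specialize (HN n (Nat.le_max_l _ _)).
  destruct (Hps (phi n)) as (_ & _ & Hlt).
  assert (INR m <= INR (phi n)).
  { apply le_INR. pose proof (increasing_nat_ge phi Hphi n). unfold n in *. lia. }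
  lra.
Qed.

Lemma cyl_max_exists : (exists x, K x) -> a <= b -> exists x t, K x /\ a <= t <= b /\
  forall y s, K y -> a <= s <= b -> f y s <= f x t.
Proof.
  intros [xK HxK] Hab.
  destruct cyl_bounded_above as [B HB].
  set (E := fun z => exists y s, K y /\ a <= s <= b /\ z = f y s).
  destruct (completeness E) as [m [Hub Hlub]].
  { exists B. intros z (y & s & Hy & Hs & ->). apply HB; assumption. }
  { exists (f xK a). exists xK, a. repeat split; auto; lra. }
  assert (Hnear : forall n : nat, exists ys : pt * R,
             K (fst ys) /\ a <= snd ys <= b /\ m - / INR (S n) < f (fst ys) (snd ys)).
  { intros n. apply NNPP. intros Hn.
    assert (0 < / INR (S n)) by (apply Rinv_0_lt_compat, lt_0_INR; lia).
    enough (m <= m - / INR (S n)) by lra.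
    apply Hlub. intros z (y & s & Hy & Hs & ->).
    apply Rnot_lt_le. intros Hlt. apply Hn. exists (y, s). auto. }
  destruct (choice _ Hnear) as [ps Hps].
  destruct (cyl_seq_limsup (fun n => fst (ps n)) (fun n => snd (ps n)))
    as [phi [x [t [Hphi [Hx [Ht Hlim]]]]]].
  { intros n. split; apply Hps. }
  exists x, t. split; [assumption | split; [assumption|]].
  assert (Hm : m <= f x t).
  { apply Rnot_lt_le. intros Hlt.
    destruct (Hlim ((m - f x t) / 2)) as [N HN]; [lra|].
    destruct (archimed_cor1 ((m - f x t) / 2)) as [N' [HN' HN'0]]; [lra|].
    set (n := max N N').
    specialize (HN n (Nat.le_max_l _ _)).
    destruct (Hps (phi n)) as (_ & _ & Hlow).
    assert (/ INR (S (phi n)) <= / INR N').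
    { apply Rinv_le_contravar; [apply lt_0_INR; assumption|].
      apply le_INR. pose proof (increasing_nat_ge phi Hphi n). unfold n in *. lia. }
    simpl in HN. lra. }
  intros y s Hy Hs. enough (f y s <= m) by lra.
  apply Hub. exists y, s. auto.
Qed.

End ExtremeValue.

Section ContinuityOnCylinders.
Variable P : pt -> R -> Prop.

Lemma cont_on3_sub (Q : pt -> R -> Prop) f :
  (forall x t, Q x t -> P x t) -> cont_on3 P f -> cont_on3 Q f.
Proof.
  intros HQ C x t Hx e He. destruct (C x t (HQ _ _ Hx) e He) as [d [Hd Hc]].
  exists d. split; [assumption|]. intros y s Hy. apply Hc, HQ, Hy.
Qed.

Lemma cont_on3_ext f g : (forall x t, f x t = g x t) -> cont_on3 P f -> cont_on3 P g.
Proof.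
  intros E C x t Hx e He. destruct (C x t Hx e He) as [d [Hd Hc]].
  exists d. split; [exact Hd|]. intros y s Hy Hb Hs. rewrite <- !E. exact (Hc y s Hy Hb Hs).
Qed.

Lemma cont_on3_const c : cont_on3 P (fun _ _ => c).
Proof.
  intros x t _ e He. exists 1. split; [lra|]. intros. rewrite Rminus_diag, Rabs_R0. exact He.
Qed.

Lemma cont_on3_fst : cont_on3 P (fun x _ => fst x).
Proof. intros x t _ e He. exists e. split; [assumption|]. intros y s _ [H _] _. exact H. Qed.

Lemma cont_on3_snd : cont_on3 P (fun x _ => snd x).
Proof. intros x t _ e He. exists e. split; [assumption|]. intros y s _ [_ H] _. exact H. Qed.

Lemma cont_on3_of_space (S : pt -> Prop) g :
  (forall x t, P x t -> S x) -> cont_on2 S g -> cont_on3 P (fun x _ => g x).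
Proof.
  intros HS C x t Hx e He. destruct (C x (HS _ _ Hx) e He) as [d [Hd Hc]].
  exists d. split; [assumption|]. intros y s Hy Hb _. exact (Hc y (HS _ _ Hy) Hb).
Qed.

Lemma cont_on3_of_time h : (forall t, continuity_pt h t) -> cont_on3 P (fun _ t => h t).
Proof.
  intros C x t _ e He. destruct (C t e He) as [d [Hd Hc]].
  exists d. split; [assumption|]. intros y s _ _ Hs.
  destruct (Req_dec s t) as [->|Hst]; [rewrite Rminus_diag, Rabs_R0; exact He|].
  apply (Hc s). split; [split; [exact I | congruence] | exact Hs].
Qed.

Lemma cont_on3_plus f g : cont_on3 P f -> cont_on3 P g -> cont_on3 P (fun x t => f x t + g x t).
Proof.
  intros Cf Cg x t Hx e He.
  destruct (Cf x t Hx (e / 2)) as [d1 [Hd1 H1]]; [lra|].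
  destruct (Cg x t Hx (e / 2)) as [d2 [Hd2 H2]]; [lra|].
  exists (Rmin d1 d2). split; [apply Rmin_pos; assumption|].
  intros y s Hy Hb Hs. pose proof (Rmin_l d1 d2). pose proof (Rmin_r d1 d2).
  specialize (H1 y s Hy (ball_sq_le _ _ _ _ (Rmin_l d1 d2) Hb) ltac:(lra)).
  specialize (H2 y s Hy (ball_sq_le _ _ _ _ (Rmin_r d1 d2) Hb) ltac:(lra)).
  replace (f y s + g y s - (f x t + g x t)) with ((f y s - f x t) + (g y s - g x t)) by ring.
  eapply Rle_lt_trans; [apply Rabs_triang | lra].
Qed.

Lemma cont_on3_mult f g : cont_on3 P f -> cont_on3 P g -> cont_on3 P (fun x t => f x t * g x t).
Proof.
  intros Cf Cg x t Hx e He.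
  set (F := Rabs (f x t) + 1). set (G := Rabs (g x t) + 1).
  pose proof (Rabs_pos (f x t)). pose proof (Rabs_pos (g x t)).
  assert (HF : 0 < F) by (unfold F; lra). assert (HG : 0 < G) by (unfold G; lra).
  destruct (Cf x t Hx (e / 2 / G)) as [d1 [Hd1 H1]]; [apply Rdiv_lt_0_compat; lra|].
  destruct (Cg x t Hx (Rmin 1 (e / 2 / F))) as [d2 [Hd2 H2]].
  { apply Rmin_pos; [lra | apply Rdiv_lt_0_compat; lra]. }
  exists (Rmin d1 d2). split; [apply Rmin_pos; assumption|].
  intros y s Hy Hb Hs. pose proof (Rmin_l d1 d2). pose proof (Rmin_r d1 d2).
  specialize (H1 y s Hy (ball_sq_le _ _ _ _ (Rmin_l d1 d2) Hb) ltac:(lra)).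
  specialize (H2 y s Hy (ball_sq_le _ _ _ _ (Rmin_r d1 d2) Hb) ltac:(lra)).
  pose proof (Rmin_l 1 (e / 2 / F)). pose proof (Rmin_r 1 (e / 2 / F)).
  replace (f y s * g y s - f x t * g x t)
    with ((f y s - f x t) * g y s + f x t * (g y s - g x t)) by ring.
  eapply Rle_lt_trans; [apply Rabs_triang|]. rewrite !Rabs_mult.
  assert (Hgy : Rabs (g y s) <= G).
  { unfold G. replace (g y s) with (g x t + (g y s - g x t)) by ring.
    eapply Rle_trans; [apply Rabs_triang | lra]. }
  assert (e / 2 / G * G = e / 2) by (field; lra).
  assert (e / 2 / F * F = e / 2) by (field; lra).
  pose proof (Rabs_pos (f y s - f x t)). pose proof (Rabs_pos (g y s)).
  assert (Rabs (f y s - f x t) * Rabs (g y s) <= e / 2 / G * G)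
    by (apply Rmult_le_compat; lra).
  assert (Rabs (f x t) * Rabs (g y s - g x t) < F * (e / 2 / F)).
  { apply Rle_lt_trans with (Rabs (f x t) * (e / 2 / F)).
    - apply Rmult_le_compat_l; lra.
    - apply Rmult_lt_compat_r; [apply Rdiv_lt_0_compat | unfold F]; lra. }
  lra.
Qed.

Lemma cont_on3_scal c f : cont_on3 P f -> cont_on3 P (fun x t => c * f x t).
Proof. intros Cf. apply (cont_on3_mult (fun _ _ => c)); [apply cont_on3_const | exact Cf]. Qed.

Lemma cont_on3_sqnorm : cont_on3 P (fun x _ => sqnorm x).
Proof.
  apply cont_on3_plus; apply cont_on3_mult; apply cont_on3_fst || apply cont_on3_snd.
Qed.

End ContinuityOnCylinders.

(** * Symmetric 2x2 matrices *)

Lemma psd2_diag_det p q r : psd2 p q r -> 0 <= p /\ 0 <= r /\ q ^ 2 <= p * r.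
Proof.
  intros H. pose proof (H 1 0). pose proof (H 0 1). pose proof (H q (- p)).
  pose proof (H (- (r + 1)) q).
  assert (0 <= p) by nra. assert (0 <= r) by nra.
  repeat split; try assumption. destruct (Req_dec p 0) as [->|]; nra.
Qed.

Lemma pos_def2_diag_det a b c : pos_def2 a b c -> 0 < a /\ 0 < c /\ 0 < a * c - b ^ 2.
Proof.
  intros H. pose proof (H 1 0 ltac:(left; lra)). pose proof (H 0 1 ltac:(right; lra)).
  assert (0 < a) by nra. pose proof (H b (- a) ltac:(right; lra)). repeat split; nra.
Qed.

(* With cross := a r + c p - 2 b q, det (A + P) = det A + cross + det P; evaluating the form
   of P at (b, -a) and (c, -b) gives det A * tr P <= tr A * cross. *)
Lemma det_add_psd2 a b c p q r : 0 < a + c -> 0 < a * c - b ^ 2 -> psd2 p q r ->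
  (a * c - b ^ 2) * (p + r) <= (a + c) * ((a + p) * (c + r) - (b + q) ^ 2 - (a * c - b ^ 2)).
Proof.
  intros Htr Hdet HP. destruct (psd2_diag_det p q r HP) as (Hp & Hr & Hq).
  pose proof (HP b (- a)). pose proof (HP c (- b)).
  assert (Hcross : (a * c - b ^ 2) * (p + r) <= (a + c) * (a * r + c * p - 2 * b * q)) by nra.
  assert (0 <= (a + c) * (p * r - q ^ 2)) by nra.
  nra.
Qed.

Lemma det_le_add_psd2 a b c p q r : 0 < a + c -> 0 < a * c - b ^ 2 -> psd2 p q r ->
  a * c - b ^ 2 <= (a + p) * (c + r) - (b + q) ^ 2.
Proof.
  intros Htr Hdet HP. pose proof (det_add_psd2 a b c p q r Htr Hdet HP).
  destruct (psd2_diag_det p q r HP) as (Hp & Hr & _).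
  assert (0 <= (a * c - b ^ 2) * (p + r)) by nra. nra.
Qed.

Definition E2op (ut u11 u12 u22 : R) : R := - ut * (u11 + u22) + (u11 * u22 - u12 ^ 2).

Lemma E2op_pos_trace_neq0 ut a b c : 0 < E2op ut a b c -> a + c <> 0.
Proof. unfold E2op. intros H Htr. replace c with (- a) in H by lra. nra. Qed.

Lemma E2op_le_of_hessian_le ut p11 p12 p22 P11 P12 P22 eta kA c :
  0 < p11 + p22 -> psd2 (P11 - 2 * eta - p11) (P12 - p12) (P22 - 2 * eta - p22) ->
  0 <= eta -> 4 * eta <= P11 + P22 -> c <= P11 * P22 - P12 ^ 2 -> c <= eta * (P11 + P22) ->
  0 <= kA -> - ut <= kA -> kA * (P11 + P22) <= c / 3 ->
  E2op ut p11 p12 p22 <= P11 * P22 - P12 ^ 2 - 2 * c / 3.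
Proof.
  intros Hlap HP Heta Htr Hc1 Hc2 HkA Hut Hk. unfold E2op.
  destruct (psd2_diag_det _ _ _ HP) as (H11 & H22 & _).
  assert (Htime : - ut * (p11 + p22) <= c / 3).
  { assert (- ut * (p11 + p22) <= kA * (p11 + p22)) by nra.
    assert (kA * (p11 + p22) <= kA * (P11 + P22)) by nra. lra. }
  assert (Hdet : p11 * p22 - p12 ^ 2 <= P11 * P22 - P12 ^ 2 - c).
  { destruct (Rle_lt_dec (p11 * p22 - p12 ^ 2) 0) as [|Hdet]; [lra|].
    pose proof (det_le_add_psd2 _ _ _ _ _ _ Hlap Hdet HP) as Hle.
    replace ((p11 + (P11 - 2 * eta - p11)) * (p22 + (P22 - 2 * eta - p22))
             - (p12 + (P12 - p12)) ^ 2)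
      with (P11 * P22 - P12 ^ 2 - 2 * eta * (P11 + P22) + 4 * eta ^ 2) in Hle by ring.
    nra. }
  lra.
Qed.

Lemma E2op_ge_of_hessian_ge ut p11 p12 p22 P11 P12 P22 eta kA mu :
  0 < p11 + p22 -> psd2 (p11 - P11 - 2 * eta) (p12 - P12) (p22 - P22 - 2 * eta) ->
  0 < eta -> 0 < P11 + P22 -> 0 <= P11 * P22 - P12 ^ 2 ->
  mu * (P11 + P22 + 4 * eta) <= P11 * P22 - P12 ^ 2 ->
  ut <= kA -> kA <= mu -> kA * (P11 + P22 + 4 * eta) <= eta ^ 2 ->
  P11 * P22 - P12 ^ 2 + 3 * eta ^ 2 <= E2op ut p11 p12 p22.
Proof.
  intros Hlap HP Heta Htr Hdet Hmu Hut HkA Hk. unfold E2op.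
  set (trP := p11 - P11 - 2 * eta + (p22 - P22 - 2 * eta)).
  set (detA := (P11 + 2 * eta) * (P22 + 2 * eta) - P12 ^ 2).
  set (trA := P11 + P22 + 4 * eta).
  destruct (psd2_diag_det _ _ _ HP) as (H11 & H22 & _).
  assert (HtrP : 0 <= trP) by (unfold trP; lra).
  assert (HtrA : 0 < trA) by (unfold trA; lra).
  assert (HdetA : P11 * P22 - P12 ^ 2 + 4 * eta ^ 2 <= detA) by (unfold detA; nra).
  pose proof (det_add_psd2 (P11 + 2 * eta) P12 (P22 + 2 * eta) _ _ _
                ltac:(lra) ltac:(fold detA; nra) HP) as Hadd.
  replace ((P11 + 2 * eta + (p11 - P11 - 2 * eta)) * (P22 + 2 * eta + (p22 - P22 - 2 * eta))
           - (P12 + (p12 - P12)) ^ 2) with (p11 * p22 - p12 ^ 2) in Hadd by ring.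
  fold detA trP in Hadd. replace (P11 + 2 * eta + (P22 + 2 * eta)) with trA in Hadd
    by (unfold trA; ring).
  assert (Hgain : mu * trP <= p11 * p22 - p12 ^ 2 - detA).
  { apply (Rmult_le_reg_l trA); [assumption|].
    assert (mu * trA * trP <= detA * trP) by (apply Rmult_le_compat_r; [lra | unfold trA; nra]).
    nra. }
  assert (Hlap' : p11 + p22 = trA + trP) by (unfold trA, trP; ring).
  assert (- ut * (p11 + p22) >= - kA * (trA + trP)) by (rewrite Hlap' in *; nra).
  assert (kA * trP <= mu * trP) by nra.
  unfold trA in *. lra.
Qed.

Section Convergence.

Variable Omega : pt -> Prop.
Hypothesis HOm : bounded_domain Omega.
Variables u ut u1 u2 u11 u12 u22 : pt -> R -> R.
Hypothesis Hu : C21_closure Omega u ut u1 u2 u11 u12 u22.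
Hypothesis HE2 : forall x t, closure2 Omega x -> 0 <= t ->
  0 < E2op (ut x t) (u11 x t) (u12 x t) (u22 x t).
Variables U U1 U2 U11 U12 U22 : pt -> R.
Hypothesis HU : C2_closure Omega U U1 U2 U11 U12 U22.
Hypothesis Hconv : forall x, closure2 Omega x -> pos_def2 (U11 x) (U12 x) (U22 x).
Variable x0 : pt.
Hypothesis Hx0 : Omega x0.
Hypothesis Hlap0 : 0 < u11 x0 0 + u22 x0 0.
Hypothesis Hbd : forall e, 0 < e -> exists T, forall t, T <= t ->
  forall x, boundary2 Omega x -> Rabs (u x t - U x) <= e.
Hypothesis HEc : forall e, 0 < e -> exists T, forall t, T <= t ->
  forall x, closure2 Omega x ->
    Rabs (E2op (ut x t) (u11 x t) (u12 x t) (u22 x t) - (U11 x * U22 x - U12 x ^ 2)) <= e.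

Let cyl (x : pt) (t : R) : Prop := closure2 Omega x /\ 0 <= t.

Lemma Omega_open : open2 Omega.
Proof. apply HOm. Qed.

Lemma Omega_closure x : Omega x -> closure2 Omega x.
Proof. intros Hx e He. exists x. split; [exact Hx | apply ball_sq_refl, He]. Qed.

Lemma closure_bounded : exists M, forall x, closure2 Omega x ->
  Rabs (fst x) <= M /\ Rabs (snd x) <= M.
Proof.
  destruct HOm as (_ & _ & _ & [M HM]). exists (M + 1). intros x Hx.
  destruct (Hx 1 Rlt_0_1) as [y [Hy [B1 B2]]]. destruct (HM y Hy) as [C1 C2].
  split.
  - replace (fst x) with (fst y - (fst y - fst x)) by ring.
    eapply Rle_trans; [apply Rabs_triang|]. rewrite Rabs_Ropp. lra.
  - replace (snd x) with (snd y - (snd y - snd x)) by ring.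
    eapply Rle_trans; [apply Rabs_triang|]. rewrite Rabs_Ropp. lra.
Qed.

Lemma max_on_closure_cyl a b f : a <= b ->
  cont_on3 (fun x t => closure2 Omega x /\ a <= t <= b) f ->
  exists x t, closure2 Omega x /\ a <= t <= b /\
    forall y s, closure2 Omega y -> a <= s <= b -> f y s <= f x t.
Proof.
  intros Hab Hf. destruct closure_bounded as [M HM].
  apply (cyl_max_exists _ M); try assumption.
  - apply closure2_seq_closed.
  - exists x0. apply Omega_closure, Hx0.
Qed.

Lemma max_on_closure (g : pt -> R) : cont_on3 cyl (fun x _ => g x) ->
  exists xm, closure2 Omega xm /\ forall y, closure2 Omega y -> g y <= g xm.
Proof.
  intros Hg.
  destruct (max_on_closure_cyl 0 0 (fun x _ => g x) (Rle_refl 0)) as (xm & _ & Hxm & _ & Hmax).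
  { apply (cont_on3_sub cyl); [intros x t [Hx Ht]; split; [exact Hx | lra] | exact Hg]. }
  exists xm. split; [exact Hxm|]. intros y Hy. exact (Hmax y 0 Hy ltac:(lra)).
Qed.

Lemma u_continuous : cont_on3 cyl u /\ cont_on3 cyl ut /\ cont_on3 cyl u1 /\
  cont_on3 cyl u2 /\ cont_on3 cyl u11 /\ cont_on3 cyl u12 /\ cont_on3 cyl u22.
Proof. exact (proj2 Hu). Qed.

Lemma continuous_at2_of_cont_on3 F y t : cont_on3 cyl F -> Omega y -> 0 <= t ->
  continuous_at2 (fun z => F z t) y.
Proof.
  intros C Hy Ht e He. destruct (Omega_open y Hy) as [r [Hr Hball]].
  destruct (C y t (conj (Omega_closure y Hy) Ht) e He) as [d [Hd Hc]].
  exists (Rmin r d). split; [apply Rmin_pos; assumption|]. intros z Hz.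
  apply Hc.
  - split; [apply Omega_closure, Hball, (ball_sq_le _ _ _ _ (Rmin_l r d) Hz) | exact Ht].
  - exact (ball_sq_le _ _ _ _ (Rmin_r r d) Hz).
  - rewrite Rminus_diag, Rabs_R0. exact Hd.
Qed.

Lemma continuous_at2_of_cont_on2 G y : cont_on2 (closure2 Omega) G -> Omega y ->
  continuous_at2 G y.
Proof.
  intros C Hy e He. destruct (Omega_open y Hy) as [r [Hr Hball]].
  destruct (C y (Omega_closure y Hy) e He) as [d [Hd Hc]].
  exists (Rmin r d). split; [apply Rmin_pos; assumption|]. intros z Hz.
  apply Hc; [apply Omega_closure, Hball | ]; eapply ball_sq_le; [| exact Hz | | exact Hz];
    [apply Rmin_l | apply Rmin_r].
Qed.

Lemma C2_on_ball_u x t r : 0 < t -> (forall y, ball_sq x y r -> Omega y) ->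
  C2_on_ball (fun y => u y t) (fun y => u1 y t) (fun y => u2 y t)
    (fun y => u11 y t) (fun y => u12 y t) (fun y => u22 y t) x r.
Proof.
  intros Ht Hball y Hy. pose proof (Hball y Hy) as Oy.
  destruct (proj1 Hu y t Oy Ht) as (_ & D1 & D2 & D11 & D12 & D21 & D22).
  destruct u_continuous as (_ & _ & C1 & C2 & C11 & C12 & C22).
  repeat split; try assumption; apply continuous_at2_of_cont_on3; assumption || lra.
Qed.

Lemma C2_on_ball_U x r : (forall y, ball_sq x y r -> Omega y) ->
  C2_on_ball U U1 U2 U11 U12 U22 x r.
Proof.
  intros Hball y Hy. pose proof (Hball y Hy) as Oy.
  destruct HU as [HD (_ & C1 & C2 & C11 & C12 & C22)].
  destruct (HD y Oy) as (D1 & D2 & D11 & D12 & D21 & D22).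
  repeat split; try assumption; apply continuous_at2_of_cont_on2; assumption.
Qed.

(** * The Laplacian of [u] is positive *)

Let lap (x : pt) (t : R) : R := u11 x t + u22 x t.

Lemma lap_neq0 x t : closure2 Omega x -> 0 <= t -> lap x t <> 0.
Proof. intros Hx Ht. exact (E2op_pos_trace_neq0 _ _ _ _ (HE2 x t Hx Ht)). Qed.

Lemma lap_continuous : cont_on3 cyl lap.
Proof.
  destruct u_continuous as (_ & _ & _ & _ & C11 & _ & C22).
  apply cont_on3_plus; assumption.
Qed.

(* [lap x0] is only known to be continuous for [t >= 0]; precomposing with [Rmax 0] makes it
   continuous on all of [R], as [IVT] requires. *)
Lemma lap_pos_x0 t : 0 <= t -> 0 < lap x0 t.
Proof.
  intros Ht. destruct (Rlt_le_dec 0 (lap x0 t)) as [|Hle]; [assumption|exfalso].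
  assert (Hx0c : closure2 Omega x0) by apply Omega_closure, Hx0.
  assert (Hneg : lap x0 t < 0) by (pose proof (lap_neq0 x0 t Hx0c Ht); lra).
  assert (Htpos : 0 < t) by (destruct (Req_dec t 0) as [->|]; [unfold lap in Hneg; lra | lra]).
  set (f := fun s => - lap x0 (Rmax 0 s)).
  assert (Cf : continuity f).
  { intros s eps Heps.
    destruct (lap_continuous x0 (Rmax 0 s) (conj Hx0c (Rmax_l 0 s)) eps Heps) as [d [Hd Hc]].
    exists d. split; [exact Hd|]. intros s' [_ Hs']. simpl in *. unfold f, R_dist in *.
    replace (- lap x0 (Rmax 0 s') - - lap x0 (Rmax 0 s))
      with (- (lap x0 (Rmax 0 s') - lap x0 (Rmax 0 s))) by ring.
    rewrite Rabs_Ropp. apply Hc.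
    - split; [exact Hx0c | apply Rmax_l].
    - apply ball_sq_refl, Hd.
    - eapply Rle_lt_trans; [apply Rmax0_lipschitz | exact Hs']. }
  destruct (IVT f 0 t Cf Htpos) as [z [Hz Hfz]].
  - unfold f. rewrite Rmax_left by lra. unfold lap. lra.
  - unfold f. rewrite Rmax_right by lra. lra.
  - apply (lap_neq0 x0 (Rmax 0 z) Hx0c (Rmax_l 0 z)). unfold f in Hfz. lra.
Qed.

Lemma pos_part_open F t : cont_on3 cyl F -> 0 <= t -> open2 (fun z => Omega z /\ 0 < F z t).
Proof.
  intros C Ht z [Hz Hpos]. destruct (Omega_open z Hz) as [r [Hr Hball]].
  destruct (C z t (conj (Omega_closure z Hz) Ht) (F z t) Hpos) as [d [Hd Hc]].
  exists (Rmin r d). split; [apply Rmin_pos; assumption|]. intros y Hy.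
  assert (Oy : Omega y) by apply Hball, (ball_sq_le _ _ _ _ (Rmin_l r d) Hy).
  split; [exact Oy|].
  specialize (Hc y t (conj (Omega_closure y Oy) Ht) (ball_sq_le _ _ _ _ (Rmin_r r d) Hy)
                ltac:(rewrite Rminus_diag, Rabs_R0; exact Hd)).
  apply Rabs_def2 in Hc. lra.
Qed.

(* [Omega] is connected and [lap _ t] has no zero on it, so its sign is that at [x0]. *)
Lemma lap_pos x t : Omega x -> 0 <= t -> 0 < lap x t.
Proof.
  intros Hx Ht. destruct (Rlt_le_dec 0 (lap x t)) as [|Hle]; [assumption|exfalso].
  destruct HOm as (_ & _ & Hconn & _). apply Hconn.
  exists (fun z => Omega z /\ 0 < lap z t), (fun z => Omega z /\ 0 < -1 * lap z t).
  split; [|split; [|split; [|split; [|split]]]].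
  - exact (pos_part_open lap t lap_continuous Ht).
  - exact (pos_part_open _ t (cont_on3_scal _ (-1) _ lap_continuous) Ht).
  - intros z Hz. pose proof (lap_neq0 z t (Omega_closure z Hz) Ht) as Hne.
    destruct (Rtotal_order 0 (lap z t)) as [Hp | [Hz0 | Hn]].
    + left. split; assumption.
    + exfalso. apply Hne. symmetry. exact Hz0.
    + right. split; [assumption | lra].
  - exists x0. split; [exact Hx0 | split; [exact Hx0 | apply lap_pos_x0, Ht]].
  - exists x. split; [exact Hx|].
    destruct (Rle_lt_or_eq_dec _ _ Hle) as [|Heq]; [split; [exact Hx | lra]|].
    exfalso. exact (lap_neq0 x t (Omega_closure x Hx) Ht Heq).
  - intros z _ [_ H1] [_ H2]. lra.
Qed.

(** * Comparison with a decaying barrier *)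

Let perturbed_diff (alpha eta : R) (y : pt) (s : R) : R :=
  alpha * (u y s - U y) + eta * sqnorm y.

Lemma perturbed_diff_continuous alpha eta : cont_on3 cyl (perturbed_diff alpha eta).
Proof.
  destruct u_continuous as (Cu & _). destruct HU as (_ & CU & _).
  apply (cont_on3_ext _ (fun y s => alpha * u y s + (- alpha * U y + eta * sqnorm y))).
  { intros y s. unfold perturbed_diff. ring. }
  apply cont_on3_plus; [apply cont_on3_scal, Cu|].
  apply cont_on3_plus; apply cont_on3_scal; [|apply cont_on3_sqnorm].
  apply (cont_on3_of_space _ (closure2 Omega)); [intros x t [Hx _]; exact Hx | exact CU].
Qed.

Lemma interior_max_conditions alpha eta h h' T x t :
  0 <= T -> T < t -> Omega x -> (forall s, derivable_pt_lim h s (h' s)) ->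
  (forall y s, closure2 Omega y -> T <= s <= t ->
     perturbed_diff alpha eta y s + h s <= perturbed_diff alpha eta x t + h t) ->
  0 <= alpha * ut x t + h' t /\
  psd2 (- alpha * (u11 x t - U11 x) - 2 * eta) (- alpha * (u12 x t - U12 x))
       (- alpha * (u22 x t - U22 x) - 2 * eta).
Proof.
  intros HT Ht Hx Dh Hmax. unfold perturbed_diff in Hmax. split.
  - destruct (proj1 Hu x t Hx ltac:(lra)) as (Dt & _).
    assert (D := derivable_pt_lim_lincomb (fun s => u x s) h t alpha 1 _ _ Dt (Dh t)).
    apply (deriv_nonneg_at_left_max _ t _ (t - T)) in D; [lra | lra |].
    intros s Hs. pose proof (Hmax x s (Omega_closure x Hx) ltac:(lra)). lra.
  - destruct (Omega_open x Hx) as [r [Hr Hball]].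
    pose proof (C2_on_ball_lincomb (- alpha) eta _ _ _ _ _ _ _ _ _ _ _ _ x r
                  (C2_on_ball_U x r Hball) (C2_on_ball_sqnorm x r)) as C1.
    pose proof (C2_on_ball_lincomb alpha 1 _ _ _ _ _ _ _ _ _ _ _ _ x r
                  (C2_on_ball_u x t r ltac:(lra) Hball) C1) as C.
    refine (psd2_ext _ _ _ _ _ _ (hessian_nonpos_at_local_max _ _ _ _ _ _ x r Hr C _) _ _ _);
      [|ring..].
    intros y Hy. pose proof (Hmax y t (Omega_closure y (Hball y Hy)) ltac:(lra)).
    unfold sqnorm in *. lra.
Qed.

Lemma comparison_with_barrier alpha eta e A k T t1 :
  (alpha = 1 \/ alpha = -1) -> 0 < e -> 0 < k -> 0 <= A -> 0 <= T -> T <= t1 ->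
  (forall x, closure2 Omega x -> 0 <= eta * sqnorm x <= e / 4) ->
  (forall t, T <= t -> forall x, boundary2 Omega x -> Rabs (u x t - U x) <= e / 4) ->
  (forall x, closure2 Omega x -> perturbed_diff alpha eta x T <= A) ->
  (forall x t, Omega x -> T < t -> 0 <= alpha * ut x t + k * A ->
     psd2 (- alpha * (u11 x t - U11 x) - 2 * eta) (- alpha * (u12 x t - U12 x))
          (- alpha * (u22 x t - U22 x) - 2 * eta) -> False) ->
  forall y s, closure2 Omega y -> T <= s <= t1 ->
    perturbed_diff alpha eta y s <= A * exp (- k * (s - T)) + e / 2.
Proof.
  intros Halpha He Hk HA HT HTt1 Hq Hbdy Hinit Hexcl.
  set (g := fun s => A * exp (- k * (s - T))).
  set (h := fun s => - g s - e / 2).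
  assert (Dh : forall s, derivable_pt_lim h s (k * g s))
    by (intros s; apply derivable_pt_lim_exp_barrier).
  set (W := fun y s => perturbed_diff alpha eta y s + h s).
  assert (CW : cont_on3 (fun x t => closure2 Omega x /\ T <= t <= t1) W).
  { apply cont_on3_plus.
    - apply (cont_on3_sub cyl); [intros x t [Hx Ht]; split; [exact Hx | lra]|].
      apply perturbed_diff_continuous.
    - apply cont_on3_of_time. intros t. exact (derivable_continuous_pt _ _ (exist _ _ (Dh t))). }
  destruct (max_on_closure_cyl T t1 W HTt1 CW) as (xs & ts & Hxs & Hts & Hmax).
  assert (HWs : W xs ts <= 0).
  { apply Rnot_lt_le. intros Hpos. unfold W, h, perturbed_diff in Hpos.
    pose proof (Hq xs Hxs). pose proof (exp_decay_bounds A k T ts HA Hk ltac:(lra)).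
    destruct (classic (Omega xs)) as [Oxs | Nxs].
    - destruct (Req_dec ts T) as [-> | HtsT].
      + pose proof (Hinit xs Hxs). unfold g, perturbed_diff in *.
        rewrite Rminus_diag, Rmult_0_r, exp_0 in Hpos. lra.
      + destruct (interior_max_conditions alpha eta h (fun s => k * g s) T xs ts HT ltac:(lra)
                    Oxs Dh) as [Htime Hhess].
        { intros y s Hy Hs. apply Hmax; [exact Hy | lra]. }
        apply (Hexcl xs ts Oxs ltac:(lra)); [|exact Hhess].
        unfold g in Htime. nra.
    - pose proof (Hbdy ts ltac:(lra) xs (conj Hxs Nxs)).
      pose proof (sign_mul_le_abs alpha (u xs ts - U xs) Halpha). unfold g in *. lra. }
  intros y s Hy Hs. pose proof (Hmax y s Hy Hs). unfold W, h, g in *. lra.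
Qed.

(* The barrier starts at the maximum [A] of the perturbed difference at time [T] and decays
   below [e / 2] after time [2 A / (e k)]. *)
Lemma eventually_le_of_barrier alpha eta e T0 (kappa : R -> R) :
  (alpha = 1 \/ alpha = -1) -> 0 < e ->
  (forall x, closure2 Omega x -> 0 <= eta * sqnorm x <= e / 4) ->
  (forall A, 0 <= A -> 0 < kappa A) ->
  (forall A, 0 <= A -> forall x t, Omega x -> 0 <= t -> T0 <= t ->
     0 <= alpha * ut x t + kappa A * A ->
     psd2 (- alpha * (u11 x t - U11 x) - 2 * eta) (- alpha * (u12 x t - U12 x))
          (- alpha * (u22 x t - U22 x) - 2 * eta) -> False) ->
  exists T', forall t, T' <= t -> forall x, closure2 Omega x -> alpha * (u x t - U x) <= e.
Proof.
  intros Halpha He Hq Hkappa Hexcl.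
  destruct (Hbd (e / 4)) as [T1 HT1]; [lra|].
  set (T := Rmax 0 (Rmax T0 T1)).
  assert (HT : 0 <= T /\ T0 <= T /\ T1 <= T).
  { unfold T. pose proof (Rmax_l 0 (Rmax T0 T1)). pose proof (Rmax_r 0 (Rmax T0 T1)).
    pose proof (Rmax_l T0 T1). pose proof (Rmax_r T0 T1). lra. }
  destruct (max_on_closure_cyl T T (perturbed_diff alpha eta) (Rle_refl T))
    as (xs & ts & _ & Hts & Hmax).
  { apply (cont_on3_sub cyl); [intros x t [Hx Ht]; split; [exact Hx | lra]|].
    apply perturbed_diff_continuous. }
  assert (Hts' : ts = T) by lra. subst ts.
  set (A := Rmax 0 (perturbed_diff alpha eta xs T)).
  assert (HA : 0 <= A) by apply Rmax_l.
  set (k := kappa A). assert (Hk : 0 < k) by (apply Hkappa, HA).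
  exists (T + 2 * A / e / k). intros t Ht x Hx.
  assert (0 <= 2 * A / e / k)
    by (unfold Rdiv; repeat apply Rmult_le_pos; try apply Rlt_le, Rinv_0_lt_compat; lra).
  assert (Hcmp : perturbed_diff alpha eta x t <= A * exp (- k * (t - T)) + e / 2).
  { apply (comparison_with_barrier alpha eta e A k T t); try (assumption || lra).
    - intros s Hs y Hy. apply HT1; [lra | exact Hy].
    - intros y Hy. eapply Rle_trans; [apply (Hmax y T Hy ltac:(lra)) | apply Rmax_r].
    - intros y s Hy Hs. apply (Hexcl A HA y s Hy); lra. }
  assert (Hdecay : A * exp (- (k * (t - T))) <= e / 2).
  { apply exp_decay_le; [exact HA | exact He|].
    apply (Rmult_le_compat_l k) in Ht; [|lra]. revert Ht.
    replace (k * (T + 2 * A / e / k)) with (k * T + 2 * A / e) by (field; lra). lra. }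
  replace (- (k * (t - T))) with (- k * (t - T)) in Hdecay by ring.
  pose proof (Hq x Hx). unfold perturbed_diff in *. lra.
Qed.

(** * Both one-sided bounds *)

Lemma limit_hessian_bounds : exists dmin Lmin Lmax, 0 < dmin /\ 0 < Lmin /\
  forall x, closure2 Omega x ->
    dmin <= U11 x * U22 x - U12 x ^ 2 /\ Lmin <= U11 x + U22 x <= Lmax.
Proof.
  destruct HU as (_ & _ & _ & _ & C11 & C12 & C22).
  assert (Lift : forall G, cont_on2 (closure2 Omega) G -> cont_on3 cyl (fun x _ => G x))
    by (intros G; apply cont_on3_of_space; intros x t [Hx _]; exact Hx).
  destruct (max_on_closure (fun x => U12 x * U12 x + -1 * (U11 x * U22 x))) as [xa [Hxa Ha]].
  { apply cont_on3_plus; [|apply cont_on3_scal]; apply cont_on3_mult; apply Lift; assumption. }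
  destruct (max_on_closure (fun x => -1 * (U11 x + U22 x))) as [xb [Hxb Hb]].
  { apply cont_on3_scal, cont_on3_plus; apply Lift; assumption. }
  destruct (max_on_closure (fun x => U11 x + U22 x)) as [xc [Hxc Hc]].
  { apply cont_on3_plus; apply Lift; assumption. }
  destruct (pos_def2_diag_det _ _ _ (Hconv xa Hxa)) as (_ & _ & Hdeta).
  destruct (pos_def2_diag_det _ _ _ (Hconv xb Hxb)) as (Hb1 & Hb2 & _).
  exists (U11 xa * U22 xa - U12 xa ^ 2), (U11 xb + U22 xb), (U11 xc + U22 xc).
  split; [assumption | split; [lra|]].
  intros x Hx. specialize (Ha x Hx). specialize (Hb x Hx). specialize (Hc x Hx).
  simpl in *. nra.
Qed.

Lemma sqnorm_bounded : exists Mq, 0 < Mq /\ forall x, closure2 Omega x -> 0 <= sqnorm x <= Mq.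
Proof.
  destruct closure_bounded as [M HM]. exists (2 * M * M + 1). split.
  - nra.
  - intros x Hx. destruct (HM x Hx) as [H1 H2].
    apply Rabs_le_bounds in H1. apply Rabs_le_bounds in H2. unfold sqnorm. split; nra.
Qed.

Lemma eventually_below e : 0 < e -> exists T, forall t, T <= t ->
  forall x, closure2 Omega x -> u x t - U x <= e.
Proof.
  intros He.
  destruct limit_hessian_bounds as (dmin & Lmin & Lmax & Hdmin & HLmin & HUx).
  destruct sqnorm_bounded as (Mq & HMq & Hq).
  set (eta := Rmin (Lmin / 4) (e / (4 * Mq))).
  assert (Heta : 0 < eta) by (apply Rmin_pos; [lra | apply Rdiv_lt_0_compat; lra]).
  assert (Heta1 : eta <= Lmin / 4) by apply Rmin_l.
  assert (HetaMq : eta * Mq <= e / 4).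
  { assert (eta <= e / (4 * Mq)) by apply Rmin_r.
    assert (e / (4 * Mq) * Mq = e / 4) by (field; lra). nra. }
  set (c := Rmin dmin (eta * Lmin)).
  assert (Hc : 0 < c) by (apply Rmin_pos; nra).
  assert (Hc1 : c <= dmin) by apply Rmin_l.
  assert (Hc2 : c <= eta * Lmin) by apply Rmin_r.
  set (c' := c / (3 * (Lmax + 1))).
  assert (HLmax : 0 < Lmax + 1) by (destruct (HUx x0 (Omega_closure x0 Hx0)) as (_ & ? & ?); lra).
  assert (Hc' : 0 < c') by (apply Rdiv_lt_0_compat; lra).
  destruct (HEc (c / 3)) as [T1 HT1]; [lra|].
  destruct (eventually_le_of_barrier 1 eta e T1 (fun A => c' / (A + 1))) as [T' HT']; try lra.
  - intros x Hx. destruct (Hq x Hx). split; nra.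
  - intros A HA. apply Rdiv_lt_0_compat; lra.
  - intros A HA x t Hx Ht0 Ht Htime Hhess.
    destruct (HUx x (Omega_closure x Hx)) as (Hdet & HL1 & HL2).
    set (kA := c' / (A + 1) * A) in Htime.
    assert (HkA : kA <= c') by (apply div_succ_mul_le; lra).
    assert (HkA0 : 0 <= kA) by (apply Rmult_le_pos; [apply Rlt_le, Rdiv_lt_0_compat|]; lra).
    assert (HkA_tr : kA * (U11 x + U22 x) <= c / 3).
    { assert (kA * (U11 x + U22 x) <= c' * (Lmax + 1)) by (apply Rmult_le_compat; lra).
      replace (c' * (Lmax + 1)) with (c / 3) in * by (unfold c'; field; lra). lra. }
    pose proof (E2op_le_of_hessian_le (ut x t) (u11 x t) (u12 x t) (u22 x t)
                  (U11 x) (U12 x) (U22 x) eta kA c (lap_pos x t Hx Ht0)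
                  ltac:(apply (psd2_ext _ _ _ _ _ _ Hhess); ring)
                  ltac:(lra) ltac:(lra) ltac:(lra) ltac:(nra) HkA0 ltac:(lra) HkA_tr).
    specialize (HT1 t Ht x (Omega_closure x Hx)). apply Rabs_le_bounds in HT1. lra.
  - exists T'. intros t Ht x Hx. specialize (HT' t Ht x Hx). lra.
Qed.

Lemma eventually_above e : 0 < e -> exists T, forall t, T <= t ->
  forall x, closure2 Omega x -> U x - u x t <= e.
Proof.
  intros He.
  destruct limit_hessian_bounds as (dmin & Lmin & Lmax & Hdmin & HLmin & HUx).
  destruct sqnorm_bounded as (Mq & HMq & Hq).
  set (eta := e / (4 * Mq)).
  assert (Heta : 0 < eta) by (apply Rdiv_lt_0_compat; lra).
  assert (HetaMq : eta * Mq = e / 4) by (unfold eta; field; lra).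
  assert (HLmax : 0 < Lmax) by (destruct (HUx x0 (Omega_closure x0 Hx0)) as (_ & ? & ?); lra).
  set (mu := dmin / (Lmax + 4 * eta)).
  assert (Hmu : mu * (Lmax + 4 * eta) = dmin) by (unfold mu; field; lra).
  set (m := Rmin mu (eta ^ 2 / (Lmax + 4 * eta))).
  assert (Hm : 0 < m) by (apply Rmin_pos; apply Rdiv_lt_0_compat; nra).
  assert (Hm1 : m <= mu) by apply Rmin_l.
  assert (Hm2 : m * (Lmax + 4 * eta) <= eta ^ 2).
  { assert (m <= eta ^ 2 / (Lmax + 4 * eta)) by apply Rmin_r.
    assert (eta ^ 2 / (Lmax + 4 * eta) * (Lmax + 4 * eta) = eta ^ 2) by (field; lra). nra. }
  destruct (HEc (eta ^ 2)) as [T1 HT1]; [nra|].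
  destruct (eventually_le_of_barrier (-1) eta e T1 (fun A => m / (A + 1))) as [T' HT'];
    try lra.
  - intros x Hx. destruct (Hq x Hx). split; nra.
  - intros A HA. apply Rdiv_lt_0_compat; lra.
  - intros A HA x t Hx Ht0 Ht Htime Hhess.
    destruct (HUx x (Omega_closure x Hx)) as (Hdet & HL1 & HL2).
    set (kA := m / (A + 1) * A) in Htime.
    assert (HkA : kA <= m) by (apply div_succ_mul_le; lra).
    assert (HkA0 : 0 <= kA) by (apply Rmult_le_pos; [apply Rlt_le, Rdiv_lt_0_compat|]; lra).
    assert (Hmu_tr : mu * (U11 x + U22 x + 4 * eta) <= U11 x * U22 x - U12 x ^ 2).
    { assert (mu * (U11 x + U22 x + 4 * eta) <= mu * (Lmax + 4 * eta))
        by (apply Rmult_le_compat_l; lra). lra. }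
    assert (HkA_tr : kA * (U11 x + U22 x + 4 * eta) <= eta ^ 2).
    { assert (kA * (U11 x + U22 x + 4 * eta) <= m * (Lmax + 4 * eta))
        by (apply Rmult_le_compat; lra). lra. }
    pose proof (E2op_ge_of_hessian_ge (ut x t) (u11 x t) (u12 x t) (u22 x t)
                  (U11 x) (U12 x) (U22 x) eta kA mu (lap_pos x t Hx Ht0)
                  ltac:(apply (psd2_ext _ _ _ _ _ _ Hhess); ring)
                  Heta ltac:(lra) ltac:(lra) Hmu_tr ltac:(lra) ltac:(lra) HkA_tr).
    specialize (HT1 t Ht x (Omega_closure x Hx)). apply Rabs_le_bounds in HT1. nra.
  - exists T'. intros t Ht x Hx. specialize (HT' t Ht x Hx). lra.
Qed.

Lemma uniform_convergence e : 0 < e -> exists T, forall t, T <= t ->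
  forall x, closure2 Omega x -> Rabs (u x t - U x) <= e.
Proof.
  intros He.
  destruct (eventually_below e He) as [T1 H1]. destruct (eventually_above e He) as [T2 H2].
  exists (Rmax T1 T2). intros t Ht x Hx.
  pose proof (Rmax_l T1 T2). pose proof (Rmax_r T1 T2).
  specialize (H1 t ltac:(lra) x Hx). specialize (H2 t ltac:(lra) x Hx).
  apply Rabs_le. lra.
Qed.

End Convergence.

Theorem theorem1p1
  (Omega : pt -> Prop) (HOm : bounded_domain Omega)
  (u ut u1 u2 u11 u12 u22 : pt -> R -> R)
  (Hu : C21_closure Omega u ut u1 u2 u11 u12 u22)
  (HE2 : forall x t, closure2 Omega x -> 0 <= t ->
     0 < - ut x t * (u11 x t + u22 x t) + (u11 x t * u22 x t - u12 x t ^ 2))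
  (U U1 U2 U11 U12 U22 : pt -> R)
  (HU : C2_closure Omega U U1 U2 U11 U12 U22)
  (Hconv : forall x, closure2 Omega x -> pos_def2 (U11 x) (U12 x) (U22 x))
  (x0 : pt) (Hx0 : Omega x0) (Hlap : 0 < u11 x0 0 + u22 x0 0)
  (Hbd : forall e, 0 < e -> exists T, forall t, T <= t ->
     forall x, boundary2 Omega x -> Rabs (u x t - U x) <= e)
  (HEc : forall e, 0 < e -> exists T, forall t, T <= t ->
     forall x, closure2 Omega x ->
       Rabs ((- ut x t * (u11 x t + u22 x t) + (u11 x t * u22 x t - u12 x t ^ 2))
             - (U11 x * U22 x - U12 x ^ 2)) <= e) :
  forall e, 0 < e -> exists T, forall t, T <= t ->
    forall x, closure2 Omega x -> Rabs (u x t - U x) <= e.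
Proof.
  exact (uniform_convergence Omega HOm u ut u1 u2 u11 u12 u22 Hu HE2 U U1 U2 U11 U12 U22 HU Hconv
           x0 Hx0 Hlap Hbd HEc).
Qed.
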